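(* Let $A\in\mathbb{R}^{n\times n}$, $B\in\mathbb{R}^{n\times m}$, let $N\geq n+m$, and for $i=1,\dots,N$ let $x_{i,1},x_{i,2}\in\mathbb{R}^{n}$, $u_{i,1}\in\mathbb{R}^{m}$ satisfy $x_{i,2}=Ax_{i,1}+Bu_{i,1}$. Put $X_{N,1}:=(x_{1,1},\dots,x_{N,1})^{\top}\in\mathbb{R}^{N\times n}$, $X_{N,2}:=(x_{1,2},\dots,x_{N,2})^{\top}\in\mathbb{R}^{N\times n}$, $U_{N,1}:=(u_{1,1},\dots,u_{N,1})^{\top}\in\mathbb{R}^{N\times m}$. Suppose $\operatorname{rank}\begin{pmatrix}X_{N,1} & U_{N,1}\end{pmatrix}=n+m$. Then the matrix equation $$X_{N,2}X_{N,1}^{\top}=X_{N,1}Z_{N,2}^{\top}+U_{N,1}Z_{B_{N,1}}$$ in the unknowns $(Z_{N,2},Z_{B_{N,1}})\in\mathbb{R}^{N\times n}\times\mathbb{R}^{m\times N}$ has a unique solution, namely $Z_{N,2}=X_{N,1}A$ and $Z_{B_{N,1}}=B^{\top}X_{N,1}^{\top}$. *)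

From HB Require Import structures.
From mathcomp Require Import all_boot all_order all_algebra.
From mathcomp Require Import reals.
Set Implicit Arguments. Unset Strict Implicit. Unset Printing Implicit Defensive.
Import Order.TTheory GRing.Theory Num.Theory.
Local Open Scope ring_scope.

Definition stack_rows (R : Type) (N k : nat) (x : 'I_N -> 'cV[R]_k) : 'M[R]_(N, k) :=
  \matrix_(i < N, j < k) x i j 0.

From HB Require Import structures.
From mathcomp Require Import all_boot all_order all_algebra.
From mathcomp Require Import reals.
Import Order.TTheory GRing.Theory Num.Theory.
Local Open Scope ring_scope.

(* Transposing the dynamics gives X_{N,2} = X_{N,1} A^T + U_{N,1} B^T, so the
   equation reads [X_{N,1} U_{N,1}] (A^T X_{N,1}^T ; B^T X_{N,1}^T)
   = [X_{N,1} U_{N,1}] (Z_{N,2}^T ; Z_{B_{N,1}}).  The rank hypothesis says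
   that [X_{N,1} U_{N,1}] has full column rank, so it can be cancelled on the
   left, and the two blocks of the stacked unknown are then determined. *)

Lemma stack_rowsD (R : nmodType) (N k : nat) (x y : 'I_N -> 'cV[R]_k) :
  stack_rows (fun i => x i + y i) = stack_rows x + stack_rows y.
Proof. by apply/matrixP => i j; rewrite !mxE. Qed.

Lemma stack_rows_mull (R : comPzRingType) (N k l : nat)
    (M : 'M[R]_(l, k)) (x : 'I_N -> 'cV[R]_k) :
  stack_rows (fun i => M *m x i) = stack_rows x *m M^T.
Proof.
apply/matrixP => i j; rewrite !mxE.
by apply: eq_bigr => h _; rewrite !mxE mulrC.
Qed.

Lemma row_full_row_mx_mul_inj {F : fieldType} {N n m p : nat}
    {X : 'M[F]_(N, n)} {U : 'M[F]_(N, m)}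
    {P P' : 'M[F]_(n, p)} {Q Q' : 'M[F]_(m, p)} :
  row_full (row_mx X U) ->
  X *m P + U *m Q = X *m P' + U *m Q' -> P = P' /\ Q = Q'.
Proof.
move=> /row_full_inj XU_inj; rewrite -!mul_row_col.
by move/XU_inj/eq_col_mx.
Qed.

Theorem lemma2 (R : realType) (n m N : nat)
  (A : 'M[R]_(n, n)) (B : 'M[R]_(n, m))
  (x1 x2 : 'I_N -> 'cV[R]_n) (u1 : 'I_N -> 'cV[R]_m) :
  (n + m <= N)%N ->
  (forall i, x2 i = A *m x1 i + B *m u1 i) ->
  \rank (row_mx (stack_rows x1) (stack_rows u1)) = (n + m)%N ->
  forall (Z2 : 'M[R]_(N, n)) (ZB : 'M[R]_(m, N)),
    (stack_rows x2 *m (stack_rows x1)^T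
       = stack_rows x1 *m Z2^T + stack_rows u1 *m ZB)
    <-> (Z2 = stack_rows x1 *m A /\ ZB = B^T *m (stack_rows x1)^T).
Proof.
(* [n + m <= N] is implied by the rank hypothesis. *)
move=> _ dynamics rank_XU Z2 ZB.
set X := stack_rows x1; set U := stack_rows u1.
have X2E : stack_rows x2 = X *m A^T + U *m B^T.
  rewrite -!stack_rows_mull -stack_rowsD.
  by apply/matrixP => i j; rewrite [LHS]mxE [RHS]mxE dynamics.
have XU_full : row_full (row_mx X U) by rewrite /row_full rank_XU.
have LHSE : stack_rows x2 *m X^T = X *m (A^T *m X^T) + U *m (B^T *m X^T).
  by rewrite X2E mulmxDl !mulmxA.
split=> [| [-> ->]]; last by rewrite LHSE trmx_mul.
rewrite LHSE => /(row_full_row_mx_mul_inj XU_full) [Z2tE <-].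
by split=> //; apply: trmx_inj; rewrite trmx_mul.
Qed.
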